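(* Let $n\ge 2$ be a power of 2. Then $\mathsf{Pat}^{\mathsf{M}}(\mathsf{ADDR}_n) \geq 2^n$.
   Context: $\mathsf{ADDR}_n:\{0,1\}^{\log n+n}\to\{0,1\}$ is $\mathsf{ADDR}_n(x,y)=y_{\mathsf{bin}(x)}$ for $x\in\{0,1\}^{\log n}$, $y\in\{0,1\}^n$, where $\mathsf{bin}(x)\in[n]$ is the integer whose binary representation is $x$. For a Boolean function $f$ on $m$ variables with unique M\''obius expansion $f=\sum_{S\subseteq[m]}\widetilde f(S)\mathsf{AND}_S$ ($\mathsf{AND}_S(z)=\prod_{i\in S}z_i$, real coefficients) and M\''obius support $\mathcal S_f=\{S:\widetilde f(S)\neq0\}$, the pattern of an input $z$ is $(\mathsf{AND}_S(z))_{S\in\mathcal S_f}$, and $\mathsf{Pat}^{\mathsf{M}}(f)$ is the number of distinct patterns over all inputs. *)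

From mathcomp Require Import all_boot all_order all_algebra.
Set Implicit Arguments. Unset Strict Implicit. Unset Printing Implicit Defensive.
Import GRing.Theory Num.Theory.

Definition input (m : nat) := {ffun 'I_m -> bool}.

Definition ANDS (m : nat) (S : {set 'I_m}) (z : input m) : bool :=
  [forall i in S, z i].

Definition indic (m : nat) (T : {set 'I_m}) : input m := [ffun i => i \in T].

(* Moebius coefficient of f at S, given by Moebius inversion:
   f~(S) = sum_{T subset S} (-1)^{|S \ T|} f(1_T).  This is the (unique)
   coefficient in the expansion f = sum_S f~(S) AND_S. *)
Definition mobius_coef (m : nat) (f : input m -> bool) (S : {set 'I_m}) : int :=
  (\sum_(T : {set 'I_m} | T \subset S)
     (-1) ^+ #|S :\: T| * (f (indic T))%:R)%R.

Definition mobius_support (m : nat) (f : input m -> bool) : {set {set 'I_m}} :=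
  [set S | mobius_coef f S != 0%R].

(* pattern of z: (AND_S(z))_{S in S_f}, encoded as the set of S in S_f with AND_S(z)=1 *)
Definition pattern (m : nat) (f : input m -> bool) (z : input m) : {set {set 'I_m}} :=
  [set S in mobius_support f | ANDS S z].

Definition PatM (m : nat) (f : input m -> bool) : nat :=
  #|[set pattern f z | z : input m]|.

(* ADDR_n with n = 2^k: variables 0..k-1 are the address bits x
   (x_i has weight 2^i), variables k..k+2^k-1 are the data bits y_0..y_{n-1}. *)
Definition bin (k : nat) (z : input (k + 2 ^ k)) : nat :=
  \sum_(i < k) z (lshift (2 ^ k) i) * 2 ^ i.

Definition ADDR (k : nat) (z : input (k + 2 ^ k)) : bool :=
  [exists j : 'I_(2 ^ k), (val j == bin z) && z (rshift k j)].

From mathcomp Require Import all_boot all_order all_algebra.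
From mathcomp Require Import zify.

Set Implicit Arguments.
Unset Strict Implicit.
Unset Printing Implicit Defensive.

Import GRing.Theory.

(* For an address j let S_j consist of all address variables and the data
   variable y_j.  Among the subsets T of S_j, ADDR (1_T) = 1 only for T made of
   the address bits of j together with y_j, so Moebius inversion gives
   ADDR~(S_j) = +-1 and every S_j lies in the Moebius support.  On the inputs
   whose address bits are all 1, AND_{S_j} reads off the data bit y_j, so the
   2^n data vectors already produce 2^n distinct patterns. *)

Lemma mobius_coef_unique_true (m : nat) (f : input m -> bool) (S T0 : {set 'I_m}) :
    T0 \subset S -> f (indic T0) ->
    (forall T : {set 'I_m}, T \subset S -> f (indic T) -> T = T0) ->
  mobius_coef f S = ((-1) ^+ #|S :\: T0|)%R.
Proof.
move=> sT0S fT0 uniqT0; rewrite /mobius_coef (bigD1 T0) //= fT0 mulr1.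
rewrite big1 ?addr0 // => T /andP [sTS neT].
case fT: (f (indic T)); last by rewrite mulr0.
by rewrite (uniqT0 T sTS fT) eqxx in neT.
Qed.

Lemma PatM_lower_bound (m : nat) (f : input m -> bool) (J : finType)
    (S : J -> {set 'I_m}) (z : {ffun J -> bool} -> input m) :
    (forall j, S j \in mobius_support f) ->
    (forall y j, ANDS (S j) (z y) = y j) ->
  2 ^ #|J| <= PatM f.
Proof.
move=> supp_S ANDS_z.
have pat_inj : injective (fun y => pattern f (z y)).
  move=> y1 y2 /= eq_pat; apply/ffunP => j.
  have := congr1 (fun P : {set {set 'I_m}} => S j \in P) eq_pat.
  by rewrite !inE; move: (supp_S j); rewrite inE => -> /=; rewrite !ANDS_z.
rewrite -card_bool -card_ffun -(card_imset _ pat_inj) /PatM.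
by apply/subset_leq_card/subsetP => _ /imsetP [y _ ->]; apply: imset_f.
Qed.

Lemma binary_digits_sum (k j : nat) :
  j < 2 ^ k -> \sum_(i < k) odd (j %/ 2 ^ i) * 2 ^ i = j.
Proof.
elim: k j => [|k IHk] j lt_j; first by rewrite big_ord0; case: j lt_j.
rewrite big_ord_recl /= expn0 divn1 muln1.
under eq_bigr => i _ do rewrite /bump /= add1n expnS divnMA mulnCA.
rewrite -big_distrr /= IHk; first by rewrite divn2 mul2n odd_double_half.
by move: lt_j; rewrite expnS divn2; lia.
Qed.

Lemma odd_div_binary_sum (k : nat) (b : nat -> bool) (i0 : nat) :
  i0 < k -> odd ((\sum_(i < k) b i * 2 ^ i) %/ 2 ^ i0) = b i0.
Proof.
elim: k b i0 => [|k IHk] b i0 // lt_i0.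
rewrite big_ord_recl /= expn0 muln1.
under eq_bigr => i _ do rewrite /bump /= add1n expnS mulnCA.
rewrite -big_distrr /=; case: i0 lt_i0 => [|i0] lt_i0.
  by rewrite expn0 divn1 oddD oddM /= addbF oddb.
have lt_b0 : b 0 < 2 by case: (b 0).
rewrite expnS divnMA addnC (mulnC 2) divnMDl // (divn_small lt_b0) addn0.
exact: (IHk (fun i => b i.+1)).
Qed.

Section Address.

Variable k : nat.
Local Notation m := (k + 2 ^ k).

Lemma split_lshift (i : 'I_k) : split (lshift (2 ^ k) i) = inl i.
Proof. exact: (unsplitK (inl _ i)). Qed.

Lemma split_rshift (j : 'I_(2 ^ k)) : split (rshift k j) = inr j.
Proof. exact: (unsplitK (inr _ j)). Qed.

Lemma odd_div_bin (z : input m) (i : 'I_k) :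
  odd (bin z %/ 2 ^ i) = z (lshift (2 ^ k) i).
Proof.
pose b n := if insub n is Some i' then z (lshift (2 ^ k) i') else false.
have -> : bin z = \sum_(i < k) b i * 2 ^ i.
  by apply: eq_bigr => i' _; rewrite /b valK.
by rewrite odd_div_binary_sum // /b valK.
Qed.

Definition addr_block (j : 'I_(2 ^ k)) : {set 'I_m} :=
  [set v | if split v is inr j' then j' == j else true].

Definition addr_minterm (j : 'I_(2 ^ k)) : {set 'I_m} :=
  [set v | match split v with inl i => odd (j %/ 2 ^ i) | inr j' => j' == j end].

Lemma ADDR_addr_minterm (j : 'I_(2 ^ k)) : ADDR (indic (addr_minterm j)).
Proof.
apply/existsP; exists j; rewrite ffunE inE split_rshift eqxx andbT.
rewrite /bin (eq_bigr (fun i : 'I_k => odd (j %/ 2 ^ i) * 2 ^ i)).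
  by rewrite binary_digits_sum.
by move=> i _; rewrite ffunE inE split_lshift.
Qed.

Lemma ADDR_indic_sub_addr_block (j : 'I_(2 ^ k)) (T : {set 'I_m}) :
  T \subset addr_block j -> ADDR (indic T) -> T = addr_minterm j.
Proof.
move=> sTS /existsP [j' /andP [/eqP bin_T]]; rewrite ffunE => Tj'.
have /eqP eq_j' : j' == j by have := subsetP sTS _ Tj'; rewrite inE split_rshift.
subst j'; apply/setP => v; rewrite -(splitK v) inE.
case: (split v) => [i | j'] /=.
  by rewrite split_lshift bin_T odd_div_bin ffunE.
rewrite split_rshift; have [-> // | ne_j'] := eqVneq j' j.
by apply/negbTE/negP => /(subsetP sTS); rewrite inE split_rshift (negbTE ne_j').
Qed.

Lemma addr_block_in_mobius_support (j : 'I_(2 ^ k)) :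
  addr_block j \in mobius_support (@ADDR k).
Proof.
rewrite inE (@mobius_coef_unique_true _ _ _ (addr_minterm j)).
- by rewrite signr_eq0.
- by apply/subsetP => v; rewrite !inE; case: (split v).
- exact: ADDR_addr_minterm.
- exact: ADDR_indic_sub_addr_block.
Qed.

Definition data_input (y : {ffun 'I_(2 ^ k) -> bool}) : input m :=
  [ffun v => if split v is inr j then y j else true].

Lemma ANDS_addr_block_data_input y j : ANDS (addr_block j) (data_input y) = y j.
Proof.
apply/forallP/idP => [/(_ (rshift k j)) | y_j v].
  by rewrite inE ffunE split_rshift eqxx.
by apply/implyP; rewrite inE ffunE; case: (split v) => // j' /eqP ->.
Qed.

End Address.

Theorem claimA4 (k : nat) (hk : 1 <= k) : 2 ^ (2 ^ k) <= PatM (@ADDR k).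
Proof.
have := PatM_lower_bound (@addr_block_in_mobius_support k)
  (@ANDS_addr_block_data_input k).
by rewrite card_ord.
Qed.
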